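(* For every $n\ge 2$, the diameter of the origami flip graph ${\rm OFG}(M_{2,n})$ is $\lceil n^2/2\rceil$.
   Context: The $2\times n$ Miura-ori $M_{2,n}$ has faces $\alpha_{i,j}$ ($i\in\{1,2\}$, $j\in\{1,\dots,n\}$), interior vertices $x_1,\dots,x_{n-1}$, and creases $e_0$ and $e_{3k-1},e_{3k},e_{3k+1}$ ($k=1,\dots,n-1$). At $x_k$ the creases are left $e_{3k-3}$, top $e_{3k-1}$, right $e_{3k}$, bottom $e_{3k+1}$ (angles adjacent to the left crease obtuse, others acute). Face $\alpha_{1,j}$ is bordered by those of $e_{3j-4}$ (iff $j\ge2$), $e_{3j-3}$, $e_{3j-1}$ (iff $j\le n-1$); $\alpha_{2,j}$ by those of $e_{3j-2}$ (iff $j\ge2$), $e_{3j-3}$, $e_{3j+1}$ (iff $j\le n-1$). An MV assignment $\mu$ maps creases to $\{1,-1\}$; it is locally valid if for each $k$ exactly one of $\mu(e_{3k-1}),\mu(e_{3k}),\mu(e_{3k+1})$ differs from $\mu(e_{3k-3})$. The face flip $\mu_\alpha$ negates $\mu$ on the creases bordering $\alpha$; $\alpha$ is flippable under $\mu$ if $\mu,\mu_\alpha$ are both locally valid. ${\rm OFG}(M_{2,n})$ is the graph whose vertices are the locally valid MV assignments, with $\mu\sim\mu_\alpha$ for each flippable $\alpha$. *)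

From mathcomp Require Import all_boot.
Set Implicit Arguments. Unset Strict Implicit. Unset Printing Implicit Defensive.

(* Creases of M_{2,n}: e_0 and e_{3k-1}, e_{3k}, e_{3k+1} for k = 1..n-1,
   i.e. the indices m < 3n-1 with m <> 1. *)
Definition crease (n : nat) := {i : 'I_(3 * n - 1) | nat_of_ord i != 1}.

(* An MV assignment: true encodes +1 (say M), false encodes -1 (V). *)
Definition mv (n : nat) := {ffun crease n -> bool}.

(* value of mu on crease e_m (default false for non-creases, never used) *)
Definition mv_at (n : nat) (mu : mv n) (m : nat) : bool :=
  match (insub m : option 'I_(3 * n - 1)) with
  | Some i => match (insub i : option (crease n)) with
              | Some c => mu c
              | None => false
              end
  | None => false
  end.

Definition valid_at (n : nat) (mu : mv n) (k : nat) : bool :=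
  count (fun m => mv_at mu m != mv_at mu (3 * k - 3))
        [:: 3 * k - 1; 3 * k; 3 * k + 1] == 1.

Definition locally_valid (n : nat) (mu : mv n) : bool :=
  all (valid_at mu) (iota 1 (n - 1)).

(* Faces alpha_{i,j}, i in {1,2}, j in {1..n}, encoded 0-based as (i-1, j-1). *)
Definition face (n : nat) := ('I_2 * 'I_n)%type.

(* does crease e_c border face alpha_{i,j} (1-based i, j)? *)
Definition borders (n i j c : nat) : bool :=
  if i == 1 then
    [|| (2 <= j) && (c == 3 * j - 4), c == 3 * j - 3 | (j <= n - 1) && (c == 3 * j - 1)]
  else
    [|| (2 <= j) && (c == 3 * j - 2), c == 3 * j - 3 | (j <= n - 1) && (c == 3 * j + 1)].

Definition face_flip (n : nat) (mu : mv n) (a : face n) : mv n :=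
  [ffun c : crease n =>
     mu c (+) borders n (a.1).+1 (a.2).+1 (nat_of_ord (val c))].

Definition flippable (n : nat) (mu : mv n) (a : face n) : bool :=
  locally_valid mu && locally_valid (face_flip mu a).

Definition ofg_adj (n : nat) : rel (mv n) :=
  fun mu nu => [exists a : face n, flippable mu a && (nu == face_flip mu a)].

Definition ofg_walk (n : nat) (mu nu : mv n) (s : seq (mv n)) : Prop :=
  path (@ofg_adj n) mu s /\ last mu s = nu.

Definition ofg_diameter (n d : nat) : Prop :=
  (forall mu nu : mv n, locally_valid mu -> locally_valid nu ->
     exists s, ofg_walk mu nu s /\ size s <= d) /\
  (exists mu nu : mv n, [/\ locally_valid mu, locally_valid nu &
     forall s, ofg_walk mu nu s -> d <= size s]).

(* A locally valid MV assignment is the same thing as a height function on the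
   2 x n grid of faces, up to an additive constant: crossing a crease changes the
   height by +-1 with the sign of the crease, and local validity at x_k says that
   the four signed steps around x_k sum to zero.  A flip changes the height of a
   single face by +-2, and a face can be flipped as soon as all its neighbours
   have a common height x, which sends its height h to 2x - h.

   Hence the distance between mu and nu is governed by the gap
   sum |G - G'| between height functions of mu and nu: a flip changes the gap
   by at most 2, and as long as G - G' is even and nonzero some flip lowers it
   by exactly 2 (flip, among the faces where e(G - G') > 0 for a sign e, one
   that maximises eG).  Choosing the additive constant near the middle column
   makes the gap at most n^2 + 1, since the column sums of (G - G')/2 form a
   2-Lipschitz sequence; conversely, for the two ramps with heights (k, k + 1)
   and (-k, -k - 1) the gap is at least n^2 + (n mod 2) whatever the constant. *)

From mathcomp Require Import all_boot all_order all_algebra zify.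
Set Implicit Arguments. Unset Strict Implicit. Unset Printing Implicit Defensive.
Import Order.TTheory GRing.Theory Num.Theory.
Local Open Scope ring_scope.

Definition sgn (b : bool) : int := if b then 1 else -1.

Lemma sgn_addb b t : sgn (b (+) t) = if t then - sgn b else sgn b.
Proof. by case: b; case: t. Qed.

Lemma sgn_inj : injective sgn.
Proof. by case; case. Qed.

Lemma norm_sgn b : `|sgn b| = 1.
Proof. by case: b. Qed.

Section Creases.
Variable n : nat.

Lemma mv_at_crease (mu : mv n) (c : crease n) : mv_at mu (val (val c)) = mu c.
Proof. by rewrite /mv_at !valK. Qed.

Lemma crease_at m : (m < 3 * n - 1)%N -> m != 1%N -> exists c : crease n, val (val c) = m.
Proof. by move=> lt_m_n m_neq1; exists (exist _ (Ordinal lt_m_n) m_neq1). Qed.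

Lemma mv_at_ffun (F : nat -> bool) m : (m < 3 * n - 1)%N -> m != 1%N ->
  mv_at ([ffun c : crease n => F (val (val c))] : mv n) m = F m.
Proof. by move=> lt_m ne_m; have [c <-] := crease_at lt_m ne_m; rewrite mv_at_crease ffunE. Qed.

Lemma mv_at_face_flip (mu : mv n) a m : (m < 3 * n - 1)%N -> m != 1%N ->
  mv_at (face_flip mu a) m = mv_at mu m (+) borders n (a.1).+1 (a.2).+1 m.
Proof. by move=> lt_m ne_m; have [c <-] := crease_at lt_m ne_m; rewrite !mv_at_crease ffunE. Qed.

End Creases.

(* Column k holds the faces alpha_{1,k+1} (row true) and alpha_{2,k+1} (row
   false); they are separated by e_{3k}, and e_{3k+2}, e_{3k+4} separate
   columns k and k + 1 in the top and bottom rows. *)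
Definition rung_crease (k : nat) : nat := (3 * k)%N.
Definition row_crease (r : bool) (k : nat) : nat := if r then (3 * k + 2)%N else (3 * k + 4)%N.
Arguments row_crease : simpl never.

(* Going right, the height drops across a mountain crease in the top row and
   rises across one in the bottom row. *)
Record is_height n (mu : mv n) (G : bool -> nat -> int) : Prop := IsHeight {
  height_rung : forall k, (k < n)%N -> G true k - G false k = sgn (mv_at mu (rung_crease k));
  height_row : forall r k, (k.+1 < n)%N ->
    G r k.+1 - G r k = sgn (mv_at mu (row_crease r k) (+) r) }.

Lemma valid_atE n (mu : mv n) k : valid_at mu k.+1 =
  (sgn (mv_at mu (rung_crease k)) == sgn (mv_at mu (row_crease true k))
     + sgn (mv_at mu (rung_crease k.+1)) + sgn (mv_at mu (row_crease false k))).
Proof.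
rewrite /valid_at (_ : 3 * k.+1 - 3 = rung_crease k)%N; last by rewrite /rung_crease; lia.
rewrite (_ : 3 * k.+1 - 1 = row_crease true k)%N; last by rewrite /row_crease; lia.
rewrite (_ : 3 * k.+1 = rung_crease k.+1)%N //.
rewrite (_ : rung_crease k.+1 + 1 = row_crease false k)%N /=; last first.
  by rewrite /rung_crease /row_crease; lia.
by case: (mv_at mu (rung_crease k)); case: (mv_at mu (row_crease true k));
   case: (mv_at mu (rung_crease k.+1)); case: (mv_at mu (row_crease false k)).
Qed.

Lemma locally_validP n (mu : mv n) :
  reflect (forall k, (k.+1 < n)%N -> valid_at mu k.+1) (locally_valid mu).
Proof.
apply: (iffP allP) => [valid k lt_k | valid k]; first by apply: valid; rewrite mem_iota; lia.
by rewrite mem_iota => lt_k; rewrite (_ : k = k.-1.+1) ?valid; lia.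
Qed.

Section Heights.
Variables (n : nat) (mu : mv n).

Fixpoint top_height k : int :=
  if k is k'.+1 then top_height k' - sgn (mv_at mu (row_crease true k')) else 0.

Definition height_of (r : bool) (k : nat) : int :=
  if r then top_height k else top_height k - sgn (mv_at mu (rung_crease k)).

Lemma is_height_of : locally_valid mu -> is_height mu height_of.
Proof.
move=> /locally_validP valid; split=> [k _ | [] k lt_k];
  rewrite /height_of /= ?sgn_addb; try lia.
by have := valid k lt_k; rewrite valid_atE => /eqP; lia.
Qed.

Lemma height_valid G : is_height mu G -> locally_valid mu.
Proof.
case=> rung row; apply/locally_validP => k lt_k; rewrite valid_atE.
have := rung _ lt_k; have := rung _ (ltnW lt_k).
have := row true _ lt_k; have := row false _ lt_k; rewrite !sgn_addb; lia.
Qed.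

Lemma heightD G K : is_height mu G -> is_height mu (fun r k => G r k + K).
Proof. by case=> rung row; split=> [k|r k] lt_k; [rewrite -rung | rewrite -row]; lia. Qed.

Lemma eq_height G G' : is_height mu G ->
  (forall r k, (k < n)%N -> G r k = G' r k) -> is_height mu G'.
Proof.
case=> rung row eqG; split=> [k lt_k | r k lt_k]; rewrite -!eqG ?rung ?row //; exact: ltnW.
Qed.

Lemma height_unique G G' : is_height mu G -> is_height mu G' ->
  exists K : int, forall r k, (k < n)%N -> G' r k = G r k + K.
Proof.
case=> rung row [rung' row']; exists (G' true 0%N - G true 0%N).
have top : forall k, (k < n)%N -> G' true k = G true k + (G' true 0%N - G true 0%N).
  elim=> [|k IHk] lt_k; first lia.
  by have := row true k lt_k; have := row' true k lt_k; have := IHk (ltnW lt_k); lia.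
by case=> k lt_k; [exact: top | have := top k lt_k; have := rung k lt_k; have := rung' k lt_k; lia].
Qed.

Lemma height_rungE G r k : is_height mu G -> (k < n)%N ->
  G r k - G (~~ r) k = sgn (mv_at mu (rung_crease k) (+) ~~ r).
Proof. by case=> rung _ lt_k; rewrite sgn_addb -rung //; case: r => /=; lia. Qed.

Lemma height_rung_norm G r k : is_height mu G -> (k < n)%N -> `|G r k - G (~~ r) k| = 1.
Proof. by move=> hG lt_k; rewrite height_rungE // norm_sgn. Qed.

Lemma height_row_norm G r k : is_height mu G -> (k.+1 < n)%N -> `|G r k.+1 - G r k| = 1.
Proof. by case=> _ row lt_k; rewrite row // norm_sgn. Qed.

End Heights.

Lemma height_inj n (mu nu : mv n) G : is_height mu G -> is_height nu G -> mu = nu.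
Proof.
case=> rung row [rung' row']; apply/ffunP => c; rewrite -!mv_at_crease.
case: c => [[m lt_m] /= ne_m].
have [k [[-> lt_k]|[[-> lt_k]|[-> lt_k]]]] : exists k, m = rung_crease k /\ (k < n)%N \/
    m = row_crease true k /\ (k.+1 < n)%N \/ m = row_crease false k /\ (k.+1 < n)%N.
  exists (if m %% 3 == 1 then (m %/ 3).-1 else m %/ 3)%N.
  by rewrite /rung_crease /row_crease; case: ifP; lia.
- by apply: sgn_inj; rewrite -rung // -rung'.
- by apply/(@addIb true)/sgn_inj; rewrite -row // -row'.
- by apply/(@addIb false)/sgn_inj; rewrite -row // -row'.
Qed.

Lemma height_diff_even n (mu nu : mv n) G G' : is_height mu G -> is_height nu G' ->
  (2 %| G true 0%N - G' true 0%N)%Z -> forall r k, (k < n)%N -> (2 %| G r k - G' r k)%Z.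
Proof.
move=> hG hG' even0.
have top : forall k, (k < n)%N -> (2 %| G true k - G' true k)%Z.
  elim=> // k IHk lt_k; have := IHk (ltnW lt_k).
  by have := height_row_norm true hG lt_k; have := height_row_norm true hG' lt_k; lia.
case=> k lt_k; first exact: top.
have := top k lt_k.
by have /= := height_rung_norm true hG lt_k; have /= := height_rung_norm true hG' lt_k; lia.
Qed.

Definition on_top n (a : face n) : bool := a.1 == ord0.

Definition face_at n (r : bool) (k : 'I_n) : face n := (if r then ord0 else ord_max, k).

Lemma on_top_face_at n r (k : 'I_n) : on_top (face_at r k) = r.
Proof. by case: r. Qed.

Section FaceFlip.
Variables (n : nat) (mu : mv n) (a : face n).

Lemma mv_at_flip_rung k : (k < n)%N ->
  mv_at (face_flip mu a) (rung_crease k) = mv_at mu (rung_crease k) (+) (k == a.2).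
Proof.
move=> lt_k; rewrite mv_at_face_flip /rung_crease; try lia; congr (_ (+) _).
by case: a => [[[|[|i]] ?] [j ?]]; rewrite /borders /=; lia.
Qed.

Lemma mv_at_flip_row r k : (k.+1 < n)%N ->
  mv_at (face_flip mu a) (row_crease r k) =
  mv_at mu (row_crease r k) (+) (r == on_top a) && ((k == a.2) || (k.+1 == a.2)).
Proof.
move=> lt_k; rewrite mv_at_face_flip /row_crease; try (case: r; lia); congr (_ (+) _).
by case: a => [[[|[|i]] ?] [j ?]]; case: r; rewrite /borders /on_top /=; lia.
Qed.

Lemma face_flip_height_change G G1 : is_height mu G -> is_height (face_flip mu a) G1 ->
  exists K : int,
    (forall x : bool * 'I_n, x != (on_top a, a.2) -> G1 x.1 x.2 = G x.1 x.2 + K) /\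
    `|G1 (on_top a) a.2 - G (on_top a) a.2 - K| = 2.
Proof.
move=> hG hG1; set t := on_top a; set K := G1 (~~ t) 0%N - G (~~ t) 0%N.
have other k : (k < n)%N -> G1 (~~ t) k = G (~~ t) k + K.
  elim: k => [|k IHk] lt_k; first lia.
  have := height_row hG (~~ t) lt_k; have := height_row hG1 (~~ t) lt_k.
  rewrite mv_at_flip_row // -/t (_ : (~~ t == t) = false) ?addbF; last by case: (t).
  by have := IHk (ltnW lt_k); lia.
have rung k : (k < n)%N ->
    G1 t k - G t k - K = if k == a.2 then -2 * (G t k - G (~~ t) k) else 0.
  move=> lt_k; have := height_rungE t hG1 lt_k; have := height_rungE t hG lt_k.
  rewrite mv_at_flip_rung // !sgn_addb; have := other k lt_k.
  by case: eqP; case: (~~ t); lia.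
exists K; split=> [[r k] /= | ]; last first.
  have := rung a.2 (ltn_ord _); have := height_rung_norm t hG (ltn_ord a.2); rewrite eqxx; lia.
rewrite xpair_eqE; have [-> | ne_r] := eqVneq r t => /= [ne_k | _].
  by move: ne_k; have := rung k (ltn_ord _); case: eqP => [/val_inj -> | _]; rewrite ?eqxx //; lia.
by rewrite (_ : r = ~~ t) ?other //; move: ne_r; case: (r); case: (t).
Qed.

Lemma face_flip_height G x : is_height mu G ->
  G (~~ on_top a) a.2 = x ->
  ((0 < a.2)%N -> G (on_top a) a.2.-1 = x) -> ((a.2.+1 < n)%N -> G (on_top a) a.2.+1 = x) ->
  is_height (face_flip mu a)
    (fun r k => if (r == on_top a) && (k == a.2) then 2 * x - G r k else G r k).
Proof.
move=> hG across left_nb right_nb; split=> [k lt_k | r k lt_k].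
  have := height_rungE true hG lt_k; rewrite mv_at_flip_rung // /= addbF sgn_addb.
  by case: (on_top a) across => /= across; case: eqP => [-> | _] /=; lia.
move: across left_nb right_nb; rewrite mv_at_flip_row // addbAC sgn_addb -(height_row hG) //.
case: eqP => [<- | _] /= across left_nb right_nb; last by lia.
case: (k =P a.2) => [eq0 | _]; case: (k.+1 =P a.2) => [eq1 | _] /=; try lia.
  by move: right_nb; rewrite -eq0 => /(_ lt_k); lia.
by move: left_nb; rewrite -eq1 /= => /(_ isT); lia.
Qed.

End FaceFlip.

Definition height_gap n (G G' : bool -> nat -> int) : int :=
  \sum_(x : bool * 'I_n) `|G x.1 x.2 - G' x.1 x.2|.

Lemma height_gap_update n (G1 G2 G' : bool -> nat -> int) (x0 : bool * 'I_n) :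
  (forall x, x != x0 -> G1 x.1 x.2 = G2 x.1 x.2) ->
  height_gap n G1 G' - height_gap n G2 G' =
    `|G1 x0.1 x0.2 - G' x0.1 x0.2| - `|G2 x0.1 x0.2 - G' x0.1 x0.2|.
Proof.
move=> same; rewrite /height_gap (bigD1 x0) //= [X in _ - X](bigD1 x0) //=.
rewrite (eq_bigr (fun x : bool * 'I_n => `|G2 x.1 x.2 - G' x.1 x.2|)) => [|x /same -> //].
by rewrite opprD addrACA subrr addr0.
Qed.

Lemma height_gap_eq0 n (mu nu : mv n) G G' : is_height mu G -> is_height nu G' ->
  height_gap n G G' = 0 -> mu = nu.
Proof.
move=> hG hG' /psumr_eq0P gap0; apply: (height_inj hG); apply: (eq_height hG') => r k lt_k.
by apply/esym/eqP; rewrite -subr_eq0 -normr_eq0 (gap0 (fun _ _ => normr_ge0 _) (r, Ordinal lt_k)).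
Qed.

Lemma height_gap_walk_lower n (mu nu : mv n) s G' : ofg_walk mu nu s -> is_height nu G' ->
  exists G, is_height mu G /\ height_gap n G G' <= 2 * (size s)%:Z.
Proof.
elim: s mu => [|mu1 s IHs] mu [/= walk end_s] hG'.
  by exists G'; rewrite end_s; split; rewrite // /height_gap big1 // => x _; rewrite subrr normr0.
move: walk => /andP[/existsP[a /andP[/andP[valid_mu _] /eqP def_mu1]] walk].
have [G1 [hG1 gap1]] := IHs mu1 (conj walk end_s) hG'; rewrite def_mu1 in hG1.
have [K [same changed]] := face_flip_height_change (is_height_of valid_mu) hG1.
exists (fun r k => height_of mu r k + K); split; first exact/heightD/is_height_of.
have := @height_gap_update n (fun r k => height_of mu r k + K) G1 G' _
  (fun x ne_x => esym (same x ne_x)).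
by rewrite /=; lia.
Qed.

Lemma height_gap_peak n (G G' : bool -> nat -> int) : height_gap n G G' != 0 ->
  exists eps : int, exists r0 (c0 : 'I_n),
    [/\ eps = 1 \/ eps = -1, 0 < eps * (G r0 c0 - G' r0 c0) &
     forall r k, (k < n)%N -> `|G r k - G r0 c0| = 1 -> `|G' r k - G' r0 c0| = 1 ->
       G r k = G r0 c0 - eps].
Proof.
move=> gap_neq0; pose D (x : bool * 'I_n) := G x.1 x.2 - G' x.1 x.2.
have /existsP[x1 Dx1] : [exists x, D x != 0].
  apply: contraNT gap_neq0 => /existsPn D0; apply/eqP/big1 => x _.
  by have /negbNE/eqP := D0 x; rewrite /D => ->; rewrite normr0.
have [eps [eps_pm Dx1_pos]] : exists eps : int, (eps = 1 \/ eps = -1) /\ 0 < eps * D x1.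
  by exists (Num.sg (D x1)); lia.
case: (@arg_maxP _ _ _ x1 (fun x => 0 < eps * D x) (fun x => eps * G x.1 x.2) Dx1_pos).
move=> [r0 c0] /= Dx0_pos maxG; exists eps, r0, c0; split=> // r k lt_k.
by have := maxG (r, Ordinal lt_k); case: eps_pm Dx0_pos => ->; rewrite /D /=; lia.
Qed.

Lemma height_gap_descent n (mu nu : mv n) G G' : is_height mu G -> is_height nu G' ->
  (forall r k, (k < n)%N -> (2 %| G r k - G' r k)%Z) -> height_gap n G G' != 0 ->
  exists a G1, [/\ flippable mu a, is_height (face_flip mu a) G1,
    forall r k, (k < n)%N -> (2 %| G1 r k - G' r k)%Z &
    height_gap n G1 G' + 2 = height_gap n G G'].
Proof.
move=> hG hG' even /height_gap_peak[eps [r0 [c0 [eps_pm D_pos neighbour]]]].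
pose x := G r0 c0 - eps; pose a := face_at r0 c0.
have top_a : on_top a = r0 := on_top_face_at r0 c0.
have across : G (~~ on_top a) a.2 = x.
  by rewrite top_a /a /=; apply: (neighbour (~~ r0) c0 (ltn_ord c0)); rewrite distrC;
    [exact: height_rung_norm hG (ltn_ord c0) | exact: height_rung_norm hG' (ltn_ord c0)].
have left_nb : (0 < a.2)%N -> G (on_top a) a.2.-1 = x.
  rewrite top_a /a /= => c0_gt0; have lt_c0 : (c0.-1.+1 < n)%N by rewrite prednK.
  have := height_row_norm r0 hG lt_c0; have := height_row_norm r0 hG' lt_c0.
  by rewrite prednK // => dG' dG; apply: (neighbour r0 c0.-1 (ltnW lt_c0)); lia.
have right_nb : (a.2.+1 < n)%N -> G (on_top a) a.2.+1 = x.
  rewrite top_a /a /= => lt_c0.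
  have := height_row_norm r0 hG lt_c0; have := height_row_norm r0 hG' lt_c0.
  by move=> dG' dG; apply: (neighbour r0 c0.+1 lt_c0); lia.
pose G1 (r : bool) (k : nat) := if (r == r0) && (k == c0) then 2 * x - G r k else G r k.
have hG1 : is_height (face_flip mu a) G1.
  by have := face_flip_height hG across left_nb right_nb; rewrite top_a.
exists a, G1; split=> //.
- by rewrite /flippable (height_valid hG) (height_valid hG1).
- by move=> r k lt_k; have := even r k lt_k; rewrite /G1; case: ifP; lia.
have same (y : bool * 'I_n) : y != (r0, c0) -> G1 y.1 y.2 = G y.1 y.2.
  by case: y => r k; rewrite xpair_eqE /G1 /= => /negbTE ->.
have := height_gap_update G' same; rewrite /G1 /= !eqxx /=.
by have := even r0 c0 (ltn_ord _); move: D_pos; rewrite /x; case: eps_pm => ->; lia.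
Qed.

Lemma height_gap_ge0 n G G' : 0 <= height_gap n G G'.
Proof. exact: sumr_ge0. Qed.

Lemma height_gap_walk_upper n (mu nu : mv n) G G' N : is_height mu G -> is_height nu G' ->
  (forall r k, (k < n)%N -> (2 %| G r k - G' r k)%Z) -> height_gap n G G' <= 2 * N%:Z ->
  exists s, ofg_walk mu nu s /\ (size s <= N)%N.
Proof.
move=> + hG'; elim: N mu G => [|N IHN] mu G hG even gap_le;
  have [gap0 | gap_neq0] := eqVneq (height_gap n G G') 0;
  try by exists [::]; rewrite (height_gap_eq0 hG hG' gap0).
  by have := height_gap_ge0 n G G'; lia.
have [a [G1 [flip_a hG1 even1 gap1]]] := height_gap_descent hG hG' even gap_neq0.
have [s [[path_s last_s] size_s]] := IHN _ _ hG1 even1 (ltac:(lia)).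
exists (face_flip mu a :: s); split=> //; split=> //=.
by rewrite path_s andbT; apply/existsP; exists a; rewrite flip_a eqxx.
Qed.

Lemma sum_arith m (alpha : int) :
  \sum_(0 <= i < m) (2 * i%:Z + alpha) = m%:Z * (m%:Z - 1) + m%:Z * alpha.
Proof.
elim: m => [|m IHm]; first by rewrite big_geq //; lia.
by rewrite big_nat_recr //= IHm; lia.
Qed.

Lemma even_near (a b : int) : `|a - b| <= 2 ->
  exists c : int, `|a - 2 * c| <= 1 /\ `|a - 2 * c| + `|b - 2 * c| <= 2.
Proof.
have [q [-> | ->]] : exists q, a = 2 * q \/ a = 2 * q + 1 by exists (a %/ 2)%Z; lia.
  by exists q; lia.
by have [le_ab | lt_ba] := lerP (2 * q + 1) b; [exists (q + 1) | exists q]; lia.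
Qed.

Lemma two_blocks_bound (n p : nat) (L R a b : int) : (n <= p.*2 <= n.+1)%N ->
  0 <= a <= 1 -> 0 <= b -> a + b <= 2 ->
  L <= p%:Z * (p%:Z - 1) + p%:Z * a ->
  R <= (n - p)%N%:Z * ((n - p)%N%:Z - 1) + (n - p)%N%:Z * b ->
  2 * (L + R) <= n%:Z * n%:Z + 1.
Proof.
move=> p_half a01 b0 ab; set q := (n - p)%N.
have qab : q%:Z * a + q%:Z * b <= q%:Z * 2 by rewrite -mulrDr; apply: ler_wpM2l.
have [[-> e_n] | [-> e_n]] : (p = q /\ n = q + q \/ p = q.+1 /\ n = q.+1 + q)%N by rewrite /q; lia.
all: rewrite e_n; nia.
Qed.

Section LipschitzSequence.
Variables (w : nat -> int) (n : nat).
Hypothesis step : forall j, (j.+1 < n)%N -> `|w j.+1 - w j| <= 2.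

Lemma lipschitz_bound i d : (i + d < n)%N -> `|w (i + d)%N - w i| <= 2 * d%:Z.
Proof.
elim: d => [|d IHd] lt_id; first by rewrite addn0 subrr normr0.
have := @step (i + d)%N; rewrite -addnS => /(_ lt_id).
by rewrite addnS in lt_id; have := IHd (ltnW lt_id); lia.
Qed.

Lemma lipschitz_sum_bound : (1 < n)%N ->
  exists c : int, 2 * \sum_(0 <= j < n) `|w j - 2 * c| <= n%:Z * n%:Z + 1.
Proof.
(* Split at m = ceil(n/2): the left block is compared with w (m - 1), the right
   block with w m, and 2c is an even number close to both. *)
move=> n_gt1; pose m := (n - n %/ 2)%N.
have [m_gt0 lt_mn] : (0 < m)%N /\ (m < n)%N by rewrite /m; lia.
have := @step m.-1; rewrite prednK // distrC => /(_ lt_mn) /even_near [c [near_a near_ab]].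
exists c; rewrite (big_cat_nat (leq0n m) (ltnW lt_mn)) /=.
have left : \sum_(0 <= j < m) `|w j - 2 * c| <= \sum_(0 <= j < m) (2 * j%:Z + `|w m.-1 - 2 * c|).
  rewrite [X in _ <= X]big_nat_rev /=; apply: ler_sum_nat => j /andP[_ lt_j].
  by have := lipschitz_bound (i := j) (d := (m.-1 - j)%N); rewrite (_ : j + _ = m.-1)%N; lia.
have right : \sum_(m <= j < n) `|w j - 2 * c| <= \sum_(0 <= j < n - m) (2 * j%:Z + `|w m - 2 * c|).
  rewrite -{1}(add0n m) big_addn; apply: ler_sum_nat => j /andP[_ lt_j].
  by have := lipschitz_bound (i := m) (d := j); rewrite addnC; lia.
rewrite !sum_arith in left right.
by apply: (two_blocks_bound _ _ _ _ left right) => //; rewrite /m; lia.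
Qed.

End LipschitzSequence.

Lemma height_gapE n G G' : height_gap n G G' =
  \sum_(0 <= k < n) (`|G true k - G' true k| + `|G false k - G' false k|).
Proof.
rewrite /height_gap -(pair_big xpredT xpredT (fun r (k : 'I_n) => `|G r k - G' r k|)) /=.
by rewrite big_bool -big_split big_mkord.
Qed.

Lemma ofg_walk_upper n (mu nu : mv n) : (1 < n)%N -> locally_valid mu -> locally_valid nu ->
  exists s, ofg_walk mu nu s /\ (size s <= (n * n).+1 %/ 2)%N.
Proof.
move=> n_gt1 /is_height_of hG /is_height_of hG'.
have even := height_diff_even hG hG' (dvdz0 2).
pose D r k := height_of mu r k - height_of nu r k.
pose w k := ((D true k + D false k) %/ 2)%Z.
have step j : (j.+1 < n)%N -> `|w j.+1 - w j| <= 2.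
  move=> lt_j; have := even true _ lt_j; have := even false _ lt_j.
  have := even true _ (ltnW lt_j); have := even false _ (ltnW lt_j).
  have := height_row_norm true hG lt_j; have := height_row_norm false hG lt_j.
  have := height_row_norm true hG' lt_j; have := height_row_norm false hG' lt_j.
  by rewrite /w /D; lia.
have [c gap_c] := lipschitz_sum_bound step n_gt1.
apply: (height_gap_walk_upper (heightD (- (2 * c)) hG) hG') => [r k lt_k | ].
  by have := even r k lt_k; lia.
rewrite height_gapE (eq_big_nat _ _ (F2 := fun k => 2 * `|w k - 2 * c|)) => [|k /andP[_ lt_k]].
  by rewrite -mulr_sumr; move: gap_c; set S := (\sum_(0 <= j < n) _); have := PoszM n n; lia.
have := even true _ lt_k; have := even false _ lt_k.
have := height_rung_norm true hG lt_k; have := height_rung_norm true hG' lt_k.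
by rewrite /w /D [~~ true]/=; lia.
Qed.

Lemma sum_dist_center n :
  2 * \sum_(0 <= k < n) `|n%:Z - 2 * k%:Z| = n%:Z * n%:Z + (odd n)%:Z.
Proof.
elim/ltn_ind: n => -[|[|n]] IH; first by rewrite big_geq.
  by rewrite big_nat1; lia.
rewrite big_nat_recl // big_nat_recr //=.
rewrite (eq_big_nat _ _ (F2 := fun k => `|n%:Z - 2 * k%:Z|)) => [|k _]; last by lia.
by have := IH n (ltnW (ltnSn _)); set S := (\sum_(0 <= i < n) _); lia.
Qed.

Lemma ramp_gap_lower n (K : int) : n%:Z * n%:Z + (odd n)%:Z <=
  \sum_(0 <= k < n) (`|2 * k%:Z + K| + `|2 * k%:Z + 2 + K|).
Proof.
rewrite big_split /= [X in _ <= _ + X]big_nat_rev -big_split /= -sum_dist_center mulr_sumr.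
by apply: ler_sum_nat => k /andP[_ lt_k]; lia.
Qed.

(* Mountain exactly on the bottom-row creases e_{3k+4}, resp. everywhere else. *)
Definition ramp_up n : mv n := [ffun c : crease n => val (val c) %% 3 == 1]%N.
Definition ramp_down n : mv n := [ffun c : crease n => val (val c) %% 3 != 1]%N.

Lemma ramp_up_height n : is_height (ramp_up n) (fun r k => k%:Z + (~~ r)%:Z).
Proof.
split=> [k lt_k | [] k lt_k];
  rewrite (mv_at_ffun (fun m => m %% 3 == 1)%N) /rung_crease /row_crease; try lia.
- by rewrite (_ : (3 * k) %% 3 == 1 = false)%N /=; lia.
- by rewrite (_ : (3 * k + 2) %% 3 == 1 = false)%N /=; lia.
- by rewrite (_ : (3 * k + 4) %% 3 == 1 = true)%N /=; lia.
Qed.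

Lemma ramp_down_height n : is_height (ramp_down n) (fun r k => - (k%:Z + (~~ r)%:Z)).
Proof.
split=> [k lt_k | [] k lt_k];
  rewrite (mv_at_ffun (fun m => m %% 3 != 1)%N) /rung_crease /row_crease; try lia.
- by rewrite (_ : (3 * k) %% 3 != 1 = true)%N /=; lia.
- by rewrite (_ : (3 * k + 2) %% 3 != 1 = true)%N /=; lia.
- by rewrite (_ : (3 * k + 4) %% 3 != 1 = false)%N /=; lia.
Qed.

Lemma ofg_walk_lower n s : ofg_walk (ramp_up n) (ramp_down n) s -> ((n * n).+1 %/ 2 <= size s)%N.
Proof.
move=> walk; have [G [hG gap_le]] := height_gap_walk_lower walk (ramp_down_height n).
have [K defG] := height_unique (ramp_up_height n) hG.
rewrite height_gapE (eq_big_nat _ _ (F2 := fun k => `|2 * k%:Z + K| + `|2 * k%:Z + 2 + K|))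
  in gap_le => [|k /andP[_ lt_k]]; last by rewrite !defG //=; lia.
have := le_trans (ramp_gap_lower n K) gap_le.
by have := oddM n n; rewrite andbb; lia.
Qed.

Local Close Scope ring_scope.

Theorem corollary5p9 (n : nat) : 2 <= n -> ofg_diameter n ((n * n).+1 %/ 2).
Proof.
move=> n_gt1; split=> [mu nu valid_mu valid_nu | ]; first exact: ofg_walk_upper.
exists (ramp_up n), (ramp_down n); split.
- exact: height_valid (ramp_up_height n).
- exact: height_valid (ramp_down_height n).
- exact: ofg_walk_lower.
Qed.
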